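(* Suppose $\sum_{r:\rho_r\le 1/(4k^2)}\rho_r(1-\rho_r)^k\ge\frac{1-\tau}{2}$. For every $\Delta\in(0,1)$, if $N\ge 12k^2\ln(2R/\Delta)+\frac{16\ln(2/\Delta)}{1-\tau}$, then with probability at least $1-\Delta$, $1-\widehat\tau\ge\frac{1-\tau}{8}$.
   Context: Let $R\ge 2$ be an integer and $\rho=(\rho_1,\dots,\rho_R)$ a probability vector with $\rho_r>0$ for all $r$. Let $Y_1,\dots,Y_N$ be i.i.d. labels with $\mathbb P(Y_j=r)=\rho_r$, $N_r=|\{j:Y_j=r\}|$, $\widehat\rho_r=N_r/N$. Fix an integer $k\ge1$. Set $\tau:=1-\sum_{r}\rho_r(1-\rho_r)^k$ and $\widehat\tau:=1-\sum_r\widehat\rho_r(1-\widehat\rho_r)^k$. *)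

From HB Require Import structures.
From mathcomp Require Import all_boot all_order all_algebra.
From mathcomp Require Import all_classical all_reals all_analysis.
Set Implicit Arguments. Unset Strict Implicit. Unset Printing Implicit Defensive.
Import Order.TTheory GRing.Theory Num.Theory.
Local Open Scope ring_scope.

(* Labels take values in 'I_R (label r in the paper = r.+1 here).
   A sample of N labels is a finite function Y : {ffun 'I_N -> 'I_R}. *)

Definition tau (K : realType) (R k : nat) (rho : 'I_R -> K) : K :=
  1 - \sum_(r < R) rho r * (1 - rho r) ^+ k.

Definition countN (R N : nat) (Y : {ffun 'I_N -> 'I_R}) (r : 'I_R) : nat :=
  #|[set j : 'I_N | Y j == r]|.

Definition rhohat (K : realType) (R N : nat) (Y : {ffun 'I_N -> 'I_R}) (r : 'I_R) : K :=
  (countN Y r)%:R / N%:R.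

Definition tauhat (K : realType) (R N k : nat) (Y : {ffun 'I_N -> 'I_R}) : K :=
  1 - \sum_(r < R) rhohat K Y r * (1 - rhohat K Y r) ^+ k.

Definition iid_prob (K : realType) (R N : nat) (rho : 'I_R -> K)
  (E : pred {ffun 'I_N -> 'I_R}) : K :=
  \sum_(y : {ffun 'I_N -> 'I_R} | E y) \prod_(j < N) rho (y j).

From HB Require Import structures.
From mathcomp Require Import all_boot all_order all_algebra.
From mathcomp Require Import all_classical all_reals all_analysis.
From mathcomp Require Import lra ring.
Set Implicit Arguments. Unset Strict Implicit.
Import Order.TTheory GRing.Theory Num.Theory.
Local Open Scope ring_scope.

(* Let q := 1 - tau = sum_r rho_r (1 - rho_r)^k and let S be the set of labels
   with rho_r <= 1/(4k^2), which carries mass at least q/2.  If every label of S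
   has empirical frequency at most 1/(2k), Bernoulli's inequality gives
   rhohat_r (1 - rhohat_r)^k >= rhohat_r / 2 on S, so 1 - tauhat is at least half
   the empirical mass of S; if moreover that mass is at least q/4, we get
   1 - tauhat >= q/8.  Both conditions fail only with small probability, by
   Chernoff bounds obtained by exponential tilting of the product law: tilting
   S by 1/2 bounds the lower tail of its count by Delta/2, tilting a single
   label of S by 2 bounds its upper tail by Delta/(2R), and a union bound
   concludes.  The constants need 2/3 <= ln 2 <= 3/4. *)

Lemma ler_bernoulli (K : realDomainType) (x : K) (n : nat) :
  x <= 1 -> 1 - n%:R * x <= (1 - x) ^+ n.
Proof.
move=> x_le1; elim: n => [|n IH]; first by rewrite mul0r subr0 expr0.
rewrite exprSr -natr1.
have : (1 - n%:R * x) * (1 - x) <= (1 - x) ^+ n * (1 - x).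
  by rewrite ler_wpM2r // subr_ge0.
have : 0 <= n%:R * x ^+ 2 by rewrite mulr_ge0 ?sqr_ge0.
rewrite expr2; lra.
Qed.

Lemma ln2_ge (K : realType) : 2 / 3 <= ln (2 : K).
Proof.
rewrite -ler_expR lnK ?posrE //.
have -> : (2 / 3 : K) = 16%:R * (1 / 24) by lra.
have x_le : expR (1 / 24 : K) <= 24 / 23.
  have := ler_wpM2r (expR_ge0 (1 / 24 : K)) (expR_ge1Dx (- (1 / 24))).
  by rewrite -expRD addNr expR0; lra.
rewrite expRM_natl; apply: le_trans (_ : (24 / 23) ^+ 16 <= 2).
  by apply: lerXn2r; rewrite ?nnegrE ?expR_ge0.
by rewrite !exprS expr0; lra.
Qed.

Lemma ln2_le (K : realType) : ln (2 : K) <= 3 / 4.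
Proof.
rewrite -ler_expR lnK ?posrE //.
have -> : (3 / 4 : K) = 8%:R * (3 / 32) by lra.
have x_ge : 35 / 32 <= expR (3 / 32 : K) by have := expR_ge1Dx (3 / 32 : K); lra.
rewrite expRM_natl; apply: le_trans (_ : 2 <= (35 / 32) ^+ 8) _.
  by rewrite !exprS expr0; lra.
by apply: lerXn2r; rewrite ?nnegrE ?expR_ge0 //; lra.
Qed.

Lemma mulr_onemX_ge0 (K : realDomainType) (x : K) (k : nat) :
  0 <= x -> x <= 1 -> 0 <= x * (1 - x) ^+ k.
Proof. by move=> x_ge0 x_le1; rewrite mulr_ge0 // exprn_ge0 // subr_ge0. Qed.

Lemma mulr_onemX_le (K : realDomainType) (x : K) (k : nat) :
  0 <= x -> x <= 1 -> x * (1 - x) ^+ k <= x.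
Proof.
move=> x_ge0 x_le1; rewrite -[leRHS]mulr1 ler_wpM2l // exprn_ile1 //.
  by rewrite subr_ge0.
by rewrite lerBlDr lerDl.
Qed.

Lemma half_le_mul_onemX (K : realFieldType) (x : K) (k : nat) :
  0 <= x -> x <= 1 -> k%:R * x <= 1 / 2 -> x / 2 <= x * (1 - x) ^+ k.
Proof.
move=> x_ge0 x_le1 kx_small.
apply: le_trans (ler_wpM2l x_ge0 (ler_bernoulli k x_le1)).
have : 0 <= x * (1 / 2 - k%:R * x) by rewrite mulr_ge0 // subr_ge0.
lra.
Qed.

Lemma ler_addr_divr_split (K : realFieldType) (a b c n : K) :
  0 <= a -> 0 <= b -> 0 < c -> a + b / c <= n -> a <= n /\ b <= n * c.
Proof.
move=> a_ge0 b_ge0 c_gt0 abn; rewrite -ler_pdivrMr //.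
by have := divr_ge0 b_ge0 (ltW c_gt0); split; lra.
Qed.

Section Empirical.
Variables (K : realType) (R N : nat) (y : {ffun 'I_N -> 'I_R}).

Lemma rhohat_ge0 r : 0 <= rhohat K y r.
Proof. by rewrite /rhohat divr_ge0. Qed.

Lemma rhohat_le1 r : rhohat K y r <= 1.
Proof.
rewrite /rhohat; have [N_eq0|N_gt0] := posnP N.
  by have -> : (N%:R : K) = 0 by rewrite N_eq0.
rewrite ler_pdivrMr ?ltr0n // mul1r ler_nat.
by rewrite /countN -[X in (_ <= X)%N]card_ord max_card.
Qed.

Lemma one_sub_tauhatE k :
  1 - tauhat K k y = \sum_(r < R) rhohat K y r * (1 - rhohat K y r) ^+ k.
Proof. exact: subKr. Qed.

Lemma one_sub_tauhat_ge0 k : 0 <= 1 - tauhat K k y.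
Proof.
rewrite one_sub_tauhatE; apply: sumr_ge0 => r _.
exact: mulr_onemX_ge0 (rhohat_ge0 r) (rhohat_le1 r).
Qed.

Lemma sum_rhohat_le_one_sub_tauhat k (S : pred 'I_R) :
  (forall r, S r -> k%:R * rhohat K y r <= 1 / 2) ->
  (\sum_(r < R | S r) rhohat K y r) / 2 <= 1 - tauhat K k y.
Proof.
move=> S_small; have rhohat_01 r := conj (rhohat_ge0 r) (rhohat_le1 r).
rewrite one_sub_tauhatE mulr_suml [X in _ <= X](bigID S) /= ler_wpDr //.
  by apply: sumr_ge0 => r _; have [? ?] := rhohat_01 r; exact: mulr_onemX_ge0.
apply: ler_sum => r /S_small; have [? ?] := rhohat_01 r.
exact: half_le_mul_onemX.
Qed.

Lemma one_sub_tauhat_ge_counts k (S : pred 'I_R) (q : K) :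
  (0 < N)%N -> (0 < k)%N ->
  (forall r, S r -> (countN y r)%:R <= N%:R / (2 * k%:R) :> K) ->
  N%:R * q / 4 <= (\sum_(r < R | S r) countN y r)%:R ->
  q / 8 <= 1 - tauhat K k y.
Proof.
move=> N_gt0 k_gt0 S_small S_large.
have N_pos : (0 : K) < N%:R by rewrite ltr0n.
have k_pos : (0 : K) < k%:R by rewrite ltr0n.
apply: le_trans (sum_rhohat_le_one_sub_tauhat (S := S) _).
  rewrite /rhohat -mulr_suml -natr_sum ler_pdivlMr // ler_pdivlMr //.
  by move: S_large; rewrite mulrAC; congr (_ <= _); field.
move=> r /S_small; rewrite /rhohat mulrA ler_pdivrMr // => cnt_small.
have -> : 1 / 2 * N%:R = k%:R * (N%:R / (2 * k%:R)) :> K.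
  by field; rewrite lt0r_neq0.
by rewrite ler_pM2l.
Qed.

End Empirical.

Lemma one_sub_tauE (K : realType) (R k : nat) (rho : 'I_R -> K) :
  1 - tau k rho = \sum_(r < R) rho r * (1 - rho r) ^+ k.
Proof. exact: subKr. Qed.

Section IidProb.
Variables (K : realType) (R N : nat) (rho : 'I_R -> K).
Hypothesis rho_ge0 : forall r, 0 <= rho r.

Local Notation sample := {ffun 'I_N -> 'I_R}.

Lemma iid_weight_ge0 (y : sample) : 0 <= \prod_(j < N) rho (y j).
Proof. exact: prodr_ge0. Qed.

Lemma iid_prob_le (E F : pred sample) :
  (forall y, E y -> F y) -> iid_prob rho E <= iid_prob rho F.
Proof.
move=> EF; rewrite /iid_prob [X in _ <= X](bigID E) /=.
rewrite [X in _ <= X + _](eq_bigl E) => [|y].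
  by rewrite lerDl; apply: sumr_ge0 => y _; apply: iid_weight_ge0.
by case: (boolP (E y)) => [/EF ->|]; rewrite ?andbF.
Qed.

Lemma iid_prob_orb_le (E F : pred sample) :
  iid_prob rho (fun y => E y || F y) <= iid_prob rho E + iid_prob rho F.
Proof.
have -> : iid_prob rho (fun y => E y || F y) =
    iid_prob rho (fun y => (E y || F y) && E y) +
    iid_prob rho (fun y => (E y || F y) && ~~ E y).
  by rewrite /iid_prob (bigID E).
by apply: lerD; apply: iid_prob_le => y; case: (E y); rewrite ?andbT ?andbF.
Qed.

Lemma iid_prob_exists_le {I : finType} (S : pred I) (A : I -> pred sample) :
  iid_prob rho (fun y => [exists (i | S i), A i y]) <= \sum_(i | S i) iid_prob rho (A i).
Proof.
rewrite /iid_prob (exchange_big_dep (fun y => [exists (i | S i), A i y])) /=; last first.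
  by move=> i y Si Aiy; apply/existsP; exists i; rewrite Si.
apply: ler_sum => y /existsP[i /andP[Si Aiy]].
by rewrite (bigD1 i) ?Si //= lerDl; apply: sumr_ge0 => _ _; apply: iid_weight_ge0.
Qed.

Lemma iid_mgf (g : 'I_R -> K) :
  \sum_(y : sample) \prod_(j < N) rho (y j) * \prod_(j < N) g (y j)
  = (\sum_(r < R) rho r * g r) ^+ N.
Proof.
rewrite -[in RHS](card_ord N) -prodr_const bigA_distr_bigA /=.
by apply: eq_bigr => y _; rewrite big_split.
Qed.

Lemma iid_prob_markov (g : 'I_R -> K) (E : pred sample) (c : K) :
  (forall r, 0 <= g r) -> 0 < c -> (forall y, E y -> c <= \prod_(j < N) g (y j)) ->
  iid_prob rho E <= (\sum_(r < R) rho r * g r) ^+ N / c.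
Proof.
move=> g_ge0 c_gt0 Ec; rewrite -iid_mgf mulr_suml [X in _ <= X](bigID E) /=.
apply: ler_wpDr.
  apply: sumr_ge0 => y _; rewrite divr_ge0 ?(ltW c_gt0) //.
  by rewrite mulr_ge0 ?iid_weight_ge0 ?prodr_ge0.
apply: ler_sum => y Ey; rewrite ler_pdivlMr // ler_wpM2l ?iid_weight_ge0 //.
exact: Ec.
Qed.

Hypothesis rho_sum1 : \sum_(r < R) rho r = 1.

Lemma sum_le1 (S : pred 'I_R) : \sum_(r < R | S r) rho r <= 1.
Proof.
rewrite -rho_sum1 [X in _ <= X](bigID S) /= lerDl.
by apply: sumr_ge0 => r _.
Qed.

Lemma prob_le1 r : rho r <= 1.
Proof. by have := sum_le1 (pred1 r); rewrite big_pred1_eq. Qed.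

Lemma iid_prob_predT : iid_prob rho (fun _ : sample => true) = 1.
Proof.
transitivity ((\sum_(r < R) rho r * 1) ^+ N).
  by rewrite -iid_mgf; apply: eq_bigr => y _; rewrite prodr_const expr1n mulr1.
by under eq_bigr do rewrite mulr1; rewrite rho_sum1 expr1n.
Qed.

Lemma iid_prob_union_bound (I : finType) (S : pred I) (E B : pred sample)
    (A : I -> pred sample) :
  (forall y, ~~ E y -> B y || [exists (i | S i), A i y]) ->
  1 - (iid_prob rho B + \sum_(i | S i) iid_prob rho (A i)) <= iid_prob rho E.
Proof.
move=> cover.
have split1 : 1 = iid_prob rho E + iid_prob rho (predC E).
  by rewrite -iid_prob_predT /iid_prob (bigID E).
have notE : iid_prob rho (predC E) <= iid_prob rho (fun y => B y || [exists (i | S i), A i y]).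
  exact: iid_prob_le cover.
have := iid_prob_orb_le B (fun y => [exists (i | S i), A i y]).
have := iid_prob_exists_le S A.
lra.
Qed.

End IidProb.

Lemma prod_countN (K : realType) (R N : nat) (g : 'I_R -> K) (y : {ffun 'I_N -> 'I_R}) :
  \prod_(j < N) g (y j) = \prod_(r < R) g r ^+ countN y r.
Proof.
rewrite (partition_big y predT) //=; apply: eq_bigr => r _.
by rewrite /countN cardsE -prodr_const; apply: eq_bigr => j /eqP ->.
Qed.

Lemma prod_tilt (K : realType) (R N : nat) (S : pred 'I_R) (t : K)
    (y : {ffun 'I_N -> 'I_R}) :
  \prod_(j < N) (if S (y j) then t else 1) = t ^+ (\sum_(r < R | S r) countN y r).
Proof.
rewrite (@prod_countN K R N (fun r => if S r then t else 1)) -prodrXr.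
by rewrite [RHS]big_mkcond; apply: eq_bigr => r _; case: (S r); rewrite ?expr1n.
Qed.

Section Tilt.
Variables (K : realType) (R N : nat) (rho : 'I_R -> K).
Hypotheses (rho_ge0 : forall r, 0 <= rho r) (rho_sum1 : \sum_(r < R) rho r = 1).

Lemma sum_tilt (S : pred 'I_R) (t : K) :
  \sum_(r < R) rho r * (if S r then t else 1) = 1 + (t - 1) * \sum_(r < R | S r) rho r.
Proof.
rewrite [in RHS]big_mkcond mulr_sumr -[X in X + _]rho_sum1 -big_split /=.
by apply: eq_bigr => r _; case: (S r); ring.
Qed.

(* Markov's inequality for the tilted weight t ^ #{j | S (y j)}, whose mean is
   (1 + (t - 1) P(S)) ^ N <= expR (N (t - 1) P(S)). *)
Lemma iid_prob_tilt (S : pred 'I_R) (t m : K) (E : pred {ffun 'I_N -> 'I_R}) :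
  0 < t -> (forall y, E y -> m <= (\sum_(r < R | S r) countN y r)%:R * ln t) ->
  iid_prob rho E <= expR (N%:R * ((t - 1) * \sum_(r < R | S r) rho r) - m).
Proof.
move=> t_gt0 Em.
set P := \sum_(r < R | S r) rho r.
have P_ge0 : 0 <= P by apply: sumr_ge0.
have P_le1 : P <= 1 := sum_le1 rho_ge0 rho_sum1 S.
have t_pos : t \is Num.pos by rewrite posrE.
apply: le_trans (iid_prob_markov rho_ge0 (g := fun r => if S r then t else 1)
  (c := expR m) _ (expR_gt0 m) _) _.
- by move=> r; case: (S r) => //; apply: ltW.
- by move=> y /Em; rewrite prod_tilt -[t in t ^+ _](lnK t_pos) -expRM_natl ler_expR.
rewrite sum_tilt -/P expRB expRM_natl ler_wpM2r ?invr_ge0 ?expR_ge0 //.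
apply: lerXn2r; rewrite ?nnegrE ?expR_ge0 ?expR_ge1Dx //.
have : 0 <= t * P by rewrite mulr_ge0 // ltW.
rewrite mulrBl mul1r; lra.
Qed.

Lemma iid_prob_countN_gt (r0 : 'I_R) (a L : K) :
  1 <= a -> rho r0 <= 1 / (4 * a ^+ 2) -> 12 * a ^+ 2 * L <= N%:R ->
  iid_prob rho (fun y : {ffun 'I_N -> 'I_R} => N%:R / (2 * a) < (countN y r0)%:R)
  <= expR (- L).
Proof.
move=> a_ge1 rho_small N_large.
have ln2_ge0 : 0 <= ln (2 : K) by have := ln2_ge K; lra.
apply: le_trans (iid_prob_tilt (S := fun r => r == r0) (t := 2)
  (m := ln 2 * (N%:R / (2 * a))) _ _) _ => //.
  by move=> y; rewrite big_pred1_eq [_ * ln _]mulrC => /ltW; apply: ler_wpM2l.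
rewrite big_pred1_eq ler_expR.
have a_gt0 : 0 < a by lra.
have N_ge0 : 0 <= N%:R :> K by [].
set u := a^-1.
have u_gt0 : 0 < u by rewrite invr_gt0.
have u2_le_u : u ^+ 2 <= u by rewrite expr2 ger_pMl // invf_le1.
have -> : N%:R / (2 * a) = N%:R * u / 2 by rewrite /u; field; rewrite lt0r_neq0.
have rho_u : rho r0 <= u ^+ 2 / 4.
  by move: rho_small; rewrite /u; congr (_ <= _); field; rewrite lt0r_neq0.
have L_u : L <= N%:R * u ^+ 2 / 12.
  have := ler_wpM2r (exprn_ge0 2 (ltW u_gt0)) N_large.
  have -> : 12 * a ^+ 2 * L * u ^+ 2 = 12 * L by rewrite /u; field; rewrite lt0r_neq0.
  lra.
have := ler_wpM2l N_ge0 rho_u.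
have := ler_wpM2l N_ge0 u2_le_u.
have := ler_wpM2r (mulr_ge0 N_ge0 (ltW u_gt0)) (ln2_ge K).
lra.
Qed.

Lemma iid_prob_sum_countN_lt (S : pred 'I_R) (q L : K) :
  0 <= q -> q / 2 <= \sum_(r < R | S r) rho r -> 16 * L <= N%:R * q ->
  iid_prob rho (fun y : {ffun 'I_N -> 'I_R} =>
    (\sum_(r < R | S r) countN y r)%:R < N%:R * q / 4) <= expR (- L).
Proof.
move=> q_ge0 mass_S N_large.
have ln2_ge0 : 0 <= ln (2 : K) by have := ln2_ge K; lra.
apply: le_trans (iid_prob_tilt (S := S) (t := 1 / 2)
  (m := - ln 2 * (N%:R * q / 4)) _ _) _; first lra.
  move=> y /ltW cnt_small; rewrite div1r lnV ?posrE // mulrN mulNr lerN2 mulrC.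
  exact: ler_wpM2l.
rewrite ler_expR.
have Nq_ge0 : 0 <= N%:R * q by rewrite mulr_ge0.
have := ler_wpM2l (ler0n K N) mass_S.
have := ler_wpM2l Nq_ge0 (ln2_le K).
lra.
Qed.

Lemma iid_prob_one_sub_tauhat_ge (k : nat) (S : pred 'I_R) (q L1 L2 : K) :
  (0 < N)%N -> (0 < k)%N -> 0 <= q ->
  (forall r, S r -> rho r <= 1 / (4 * k%:R ^+ 2)) ->
  q / 2 <= \sum_(r < R | S r) rho r ->
  12 * k%:R ^+ 2 * L1 <= N%:R -> 16 * L2 <= N%:R * q ->
  1 - (expR (- L2) + R%:R * expR (- L1)) <=
  iid_prob rho (fun y : {ffun 'I_N -> 'I_R} => q / 8 <= 1 - tauhat K k y).
Proof.
move=> N_gt0 k_gt0 q_ge0 S_small mass_S N_large1 N_large2.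
apply: le_trans (iid_prob_union_bound rho_ge0 rho_sum1 (S := S)
  (B := fun y => (\sum_(r < R | S r) countN y r)%:R < N%:R * q / 4)
  (A := fun r y => N%:R / (2 * k%:R) < (countN y r)%:R) _).
  apply: lerB => //; apply: lerD; first exact: iid_prob_sum_countN_lt.
  have -> : R%:R * expR (- L1) = \sum_(r < R) expR (- L1).
    by rewrite sumr_const card_ord mulr_natl.
  rewrite [X in _ <= X](bigID S) /= ler_wpDr //; first exact: sumr_ge0.
  apply: ler_sum => r /S_small rho_small.
  by apply: (iid_prob_countN_gt _ rho_small N_large1); rewrite ler1n.
move=> y; apply: contraR; rewrite negb_or -leNgt => /andP[S_large /existsPn S_few].
apply: one_sub_tauhat_ge_counts S_large => // r Sr.
by have := S_few r; rewrite Sr /= -leNgt.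
Qed.

End Tilt.

Theorem mainTheorem4 (K : realType) (R k N : nat) (rho : 'I_R -> K)
  (HR : (2 <= R)%N) (Hk : (1 <= k)%N)
  (Hpos : forall r, 0 < rho r) (Hsum : \sum_(r < R) rho r = 1)
  (Hsmall : (1 - tau k rho) / 2 <=
            \sum_(r < R | rho r <= 1 / (4 * (k%:R) ^+ 2)) rho r * (1 - rho r) ^+ k)
  (Delta : K) (HD0 : 0 < Delta) (HD1 : Delta < 1)
  (HN : 12 * (k%:R) ^+ 2 * ln (2 * R%:R / Delta)
        + 16 * ln (2 / Delta) / (1 - tau k rho) <= N%:R) :
  1 - Delta <=
  @iid_prob K R N rho (fun Y => (1 - tau k rho) / 8 <= 1 - @tauhat K R N k Y).
Proof.
have rho_ge0 r : 0 <= rho r := ltW (Hpos r).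
have rho_le1 := prob_le1 rho_ge0 Hsum.
set q := 1 - tau k rho in Hsmall HN *.
have : 0 <= q.
  by rewrite /q one_sub_tauE sumr_ge0 // => r _; apply: mulr_onemX_ge0.
rewrite le0r => /orP[/eqP q_eq0 | q_gt0].
  apply: (@le_trans _ _ 1); first by rewrite gerBl ltW.
  rewrite -{1}(iid_prob_predT N Hsum); apply: (iid_prob_le rho_ge0) => y _.
  by rewrite q_eq0 mul0r one_sub_tauhat_ge0.
set L1 := ln (2 * R%:R / Delta) in HN.
set L2 := ln (2 / Delta) in HN.
have R_gt1 : (1 : K) < R%:R by rewrite ltr1n.
have L1_ge0 : 0 <= L1 by apply: ln_ge0; rewrite ler_pdivlMr //; lra.
have L2_gt0 : 0 < L2 by apply: ln_gt0; rewrite ltr_pdivlMr //; lra.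
have [N_large1 N_large2] := ler_addr_divr_split
  (mulr_ge0 (mulr_ge0 (ler0n K 12) (exprn_ge0 2 (ler0n K k))) L1_ge0)
  (mulr_ge0 (ler0n K 16) (ltW L2_gt0)) q_gt0 HN.
have N_gt0 : (0 < N)%N by rewrite -(ltr0n K) -(pmulr_lgt0 _ q_gt0); lra.
have mass_S : q / 2 <= \sum_(r < R | rho r <= 1 / (4 * k%:R ^+ 2)) rho r.
  by apply: le_trans Hsmall (ler_sum _ _) => r _; apply: mulr_onemX_le.
apply: le_trans (iid_prob_one_sub_tauhat_ge rho_ge0 Hsum N_gt0 Hk (ltW q_gt0)
  (fun r S_r => S_r) mass_S N_large1 N_large2).
rewrite /L1 /L2 !expRN !lnK ?posrE ?divr_gt0 ?mulr_gt0 // ?ltr0n ?(ltn_trans _ HR) //.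
rewrite !invf_div.
have -> : R%:R * (Delta / (2 * R%:R)) = Delta / 2.
  by field; rewrite lt0r_neq0 //; lra.
lra.
Qed.
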